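(* Let $L\in\mathcal{N}$ and assume that $L$ has no doubly reducible elements. Then there do not exist twelve distinct elements $x',x,b,z,z',w',w,a,s,y,y',c\in L$ such that the subposet of $L$ they form is the poset whose order is generated by the relations $$x'<x<b<z<z',\quad w'<w<a<s<y<y',\quad w'<x',\ w<x,\ a<c<b,\ y<z,\ y'<z'$$ (i.e. its Hasse diagram consists of exactly these covering relations), and such that the sublattice of $L$ generated by $\{x',x,b,z,z',w',w,a,y,y'\}$ is isomorphic to $\mathbf{2}\times\mathbf{5}$ (with $x'<x<b<z<z'$ and $w'<w<a<y<y'$ the two five-element chains and $w'<x'$, $w<x$, $a<b$, $y<z$, $y'<z'$ the rungs).
   Context: $\mathcal{N}$ denotes the variety of lattices generated by the pentagon $N_5$. For elements $u,v$, $u\parallel v$ means neither $u\le v$ nor $v\le u$. An element $e$ of a lattice $L$ is doubly reducible if there exist $e_1,e_2,e_3,e_4\in L$ with $e_1\parallel e_2$, $e_3\parallel e_4$ and $e=e_1\vee e_2=e_3\wedge e_4$. $\mathbf{n}$ denotes the $n$-element chain and $\times$ the direct product of posets. *)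

From HB Require Import structures.
From mathcomp Require Import all_boot all_order.
Set Implicit Arguments. Unset Strict Implicit. Unset Printing Implicit Defensive.
Import Order.TTheory.
Local Open Scope order_scope.

Inductive lterm : Type :=
| LVar of nat
| LMeet of lterm & lterm
| LJoin of lterm & lterm.

Fixpoint leval (T : Type) (m j : T -> T -> T) (v : nat -> T) (t : lterm) : T :=
  match t with
  | LVar n => v n
  | LMeet t1 t2 => m (leval m j v t1) (leval m j v t2)
  | LJoin t1 t2 => j (leval m j v t1) (leval m j v t2)
  end.

Inductive n5 : Type := N0 | Na | Nb | Nc | N1.

Definition le5 (x y : n5) : bool :=
  match x, y with
  | N0, _ => true
  | _, N1 => true
  | Na, Na | Na, Nb | Nb, Nb | Nc, Nc => true
  | _, _ => false
  end.

Definition meet5 (x y : n5) : n5 :=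
  if le5 x y then x else if le5 y x then y else N0.
Definition join5 (x y : n5) : n5 :=
  if le5 x y then y else if le5 y x then x else N1.

(* L lies in the variety N generated by N5: L satisfies every lattice
   identity satisfied by N5 (Birkhoff: HSP(N5) = Mod(Id(N5))). *)
Definition in_N (d : Order.disp_t) (L : latticeType d) : Prop :=
  forall t1 t2 : lterm,
    (forall v : nat -> n5, leval meet5 join5 v t1 = leval meet5 join5 v t2) ->
    forall v : nat -> L,
      leval (@Order.meet d L) (@Order.join d L) v t1 =
      leval (@Order.meet d L) (@Order.join d L) v t2.

Definition doubly_reducible (d : Order.disp_t) (L : latticeType d) (e : L) : Prop :=
  exists e1 e2 e3 e4 : L,
    e1 >< e2 /\ e3 >< e4 /\ e = e1 `|` e2 /\ e = e3 `&` e4.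

(* indices: x'=0 x=1 b=2 z=3 z'=4 w'=5 w=6 a=7 s=8 y=9 y'=10 c=11 *)
Definition gen12 : rel 'I_12 := fun i j =>
  (nat_of_ord i, nat_of_ord j) \in
    [:: (0,1); (1,2); (2,3); (3,4);
        (5,6); (6,7); (7,8); (8,9); (9,10);
        (5,0); (6,1); (7,11); (11,2); (9,3); (10,4)].

Definition ord12 : rel 'I_12 := connect gen12.

Definition pts12 (d : Order.disp_t) (L : latticeType d)
  (x' x b z z' w' w a s y y' c : L) : 'I_12 -> L :=
  fun i => nth x' [:: x'; x; b; z; z'; w'; w; a; s; y; y'; c] i.

Definition shape12 (d : Order.disp_t) (L : latticeType d) (f : 'I_12 -> L) : Prop :=
  injective f /\ forall i j : 'I_12, (f i <= f j) = ord12 i j.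

Definition gen_sub (d : Order.disp_t) (L : latticeType d) (S : seq L) (u : L) : Prop :=
  forall P : L -> Prop,
    (forall x, x \in S -> P x) ->
    (forall x y, P x -> P y -> P (x `&` y) /\ P (x `|` y)) ->
    P u.

(* g : 2 x 5 -> L (encoded on pairs (i,j) with i < 2, j < 5; product order,
   meet/join componentwise min/max) is a lattice isomorphism onto the set S. *)
Definition iso_2x5 (d : Order.disp_t) (L : latticeType d)
  (S : L -> Prop) (g : nat -> nat -> L) : Prop :=
  (forall i j i' j', i < 2 -> j < 5 -> i' < 2 -> j' < 5 ->
      g i j = g i' j' -> i = i' /\ j = j')%N /\
  (forall i j i' j', i < 2 -> j < 5 -> i' < 2 -> j' < 5 ->
      g (minn i i') (minn j j') = g i j `&` g i' j' /\
      g (maxn i i') (maxn j j') = g i j `|` g i' j')%N /\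
  (forall u : L, S u <-> exists i j, (i < 2)%N /\ (j < 5)%N /\ g i j = u).

From HB Require Import structures.
From mathcomp Require Import all_boot all_order.
Import Order.TTheory.
Local Open Scope order_scope.
Set Implicit Arguments. Unset Strict Implicit. Unset Printing Implicit Defensive.

(* Three equations and two inequalities among the elements of the
   configuration hold in N5 only under the configuration's order relations.
   They become identities of N5, checked by enumerating all 5^7 valuations of
   the generators x', y', y, a, s, w, c, once y, a, w, s, c are replaced one
   after the other by
     y' ∧ (y ∨ x'),  y ∧ (a ∨ x'),  a ∧ (w ∨ x'),  (s ∨ a) ∧ y,  (c ∨ a) ∧ (a ∨ x');
   in L these substitutions change nothing, by the equations of the 2 × 5
   ladder.  Hence the relations hold in L, and they make one of the following
   elements doubly reducible:
     z ∧ (y' ∨ c) = y ∨ (b ∧ (y' ∨ c))        if x ∧ (s ∨ c) ≤ a,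
     x ∧ (a ∨ (x' ∧ c)) = w ∨ (x' ∧ c)        if b ≤ s ∨ (x ∧ c),
     b ∧ (s ∨ (x ∧ c)) = a ∨ (x ∧ (s ∨ c))    otherwise. *)

Fixpoint lsubst (sb : nat -> lterm) (t : lterm) : lterm :=
  match t with
  | LVar n => sb n
  | LMeet t1 t2 => LMeet (lsubst sb t1) (lsubst sb t2)
  | LJoin t1 t2 => LJoin (lsubst sb t1) (lsubst sb t2)
  end.

Fixpoint lvars_below (k : nat) (t : lterm) : bool :=
  match t with
  | LVar n => (n < k)%N
  | LMeet t1 t2 | LJoin t1 t2 => lvars_below k t1 && lvars_below k t2
  end.

Section Evaluation.
Variables (T : Type) (m j : T -> T -> T).
Local Notation eval := (leval m j).

Lemma leval_subst v sb t : eval v (lsubst sb t) = eval (fun n => eval v (sb n)) t.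
Proof. by elim: t => //= t1 -> t2 ->. Qed.

Lemma eq_leval_below k v v' t :
  lvars_below k t -> (forall n, (n < k)%N -> v n = v' n) -> eval v t = eval v' t.
Proof.
move=> + eq_v; elim: t => /= [n /eq_v //|t1 IH1 t2 IH2|t1 IH1 t2 IH2];
  by case/andP=> /IH1 -> /IH2 ->.
Qed.

Lemma eq_leval v v' t : v =1 v' -> eval v t = eval v' t.
Proof. by move=> eq_v; elim: t => //= t1 -> t2 ->. Qed.

Definition lupd (v : nat -> T) (i : nat) (a : T) : nat -> T :=
  fun n => if n == i then a else v n.

Definition lforce (s : seq (nat * lterm)) (v : nat -> T) : nat -> T :=
  foldl (fun v p => lupd v p.1 (eval v p.2)) v s.

Lemma eq_lforce s v v' : v =1 v' -> lforce s v =1 lforce s v'.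
Proof.
elim: s v v' => //= p s IH v v' eq_v; apply: IH => n.
by rewrite /lupd (eq_leval _ eq_v) eq_v.
Qed.

End Evaluation.

Lemma lforce_id (T : eqType) (m j : T -> T -> T) s u :
  all (fun p => leval m j u p.2 == u p.1) s -> lforce m j s u =1 u.
Proof.
elim: s u => //= p s IH u /andP[/eqP fix_p /IH fix_s] n.
rewrite -fix_s; apply: eq_lforce => k.
by rewrite /lupd fix_p; case: eqP => [->|].
Qed.

Definition lforce_term (s : seq (nat * lterm)) (t : lterm) : lterm :=
  foldr (fun p t => lsubst (lupd LVar p.1 p.2) t) t s.

Lemma leval_lforce_term (T : Type) (m j : T -> T -> T) s v t :
  leval m j v (lforce_term s t) = leval m j (lforce m j s v) t.
Proof.
elim: s v => //= p s IH v; rewrite leval_subst -IH.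
by apply: eq_leval => n; rewrite /lupd; case: eqP.
Qed.

Definition n5_eqb (e1 e2 : n5) : bool :=
  match e1, e2 with
  | N0, N0 | Na, Na | Nb, Nb | Nc, Nc | N1, N1 => true
  | _, _ => false
  end.

Lemma n5_eqbP : Equality.axiom n5_eqb.
Proof. by move=> e1 e2; apply: (iffP idP) => [|->]; [case: e1; case: e2 | case: e2]. Qed.

HB.instance Definition _ := hasDecEq.Build n5 n5_eqbP.

Fixpoint all_n5_seqs (k : nat) (P : seq n5 -> bool) : bool :=
  match k with
  | 0 => P [::]
  | k.+1 => all (fun e => all_n5_seqs k (fun l => P (e :: l))) [:: N0; Na; Nb; Nc; N1]
  end.

Lemma all_n5_seqsP k P l : all_n5_seqs k P -> size l = k -> P l.
Proof.
elim: k P l => [|k IH] P [|e l] // all_P [size_l].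
by apply: (IH (fun l => P (e :: l))) size_l; apply: (allP all_P); case: e.
Qed.

Definition n5_forced_identity k s t1 t2 : bool :=
  [&& lvars_below k (lforce_term s t1), lvars_below k (lforce_term s t2) &
  all_n5_seqs k (fun l => let v := lforce meet5 join5 s (nth N0 l) in
                           leval meet5 join5 v t1 == leval meet5 join5 v t2)].

Lemma n5_forced_identityP k s t1 t2 : n5_forced_identity k s t1 t2 ->
  forall v, leval meet5 join5 (lforce meet5 join5 s v) t1 =
            leval meet5 join5 (lforce meet5 join5 s v) t2.
Proof.
case/and3P=> vars1 vars2 all_v v.
have nth_v n : (n < k)%N -> v n = nth N0 (map v (iota 0 k)) n.
  by move=> lt_n_k; rewrite (nth_map 0) ?size_iota // nth_iota.
rewrite -!leval_lforce_term (eq_leval_below _ _ vars1 nth_v) (eq_leval_below _ _ vars2 nth_v).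
rewrite !leval_lforce_term; apply/eqP.
by apply: (all_n5_seqsP all_v); rewrite size_map size_iota.
Qed.

Lemma in_N_forced_identity d (L : latticeType d) k s t1 t2 :
  in_N L -> n5_forced_identity k s t1 t2 ->
  forall u : nat -> L, leval Order.meet Order.join (lforce Order.meet Order.join s u) t1 =
                       leval Order.meet Order.join (lforce Order.meet Order.join s u) t2.
Proof.
move=> inN /n5_forced_identityP n5_id u; rewrite -!leval_lforce_term.
by apply: inN => v; rewrite !leval_lforce_term; apply: n5_id.
Qed.

Lemma doubly_reducible_of_nle d (L : latticeType d) (e1 e2 e3 e4 : L) :
  e1 `|` e2 = e3 `&` e4 ->
  ~~ (e1 <= e2) -> ~~ (e2 <= e1) -> ~~ (e3 <= e4) -> ~~ (e4 <= e3) ->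
  doubly_reducible (e3 `&` e4).
Proof.
move=> eq_e n12 n21 n34 n43; rewrite -eq_e.
by exists e1, e2, e3, e4; rewrite /Order.comparable !negb_or n12 n21 n34 n43.
Qed.

Lemma connect_sub_preorder (T : finType) (e r : rel T) :
  reflexive r -> transitive r -> subrel e r -> subrel (connect e) r.
Proof.
move=> r_refl r_trans e_r x y /connectP[p]; elim: p x => [|z p IH] x /=.
  by move=> _ ->; apply: r_refl.
by case/andP=> /e_r r_xz /IH r_zy /r_zy; apply: r_trans r_xz.
Qed.

Definition gen12_pairs : seq (nat * nat) :=
  [:: (0,1); (1,2); (2,3); (3,4); (5,6); (6,7); (7,8); (8,9); (9,10);
      (5,0); (6,1); (7,11); (11,2); (9,3); (10,4)].

Lemma gen12E (i j : 'I_12) : gen12 i j = (((i : nat), (j : nat)) \in gen12_pairs).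
Proof. by []. Qed.

(* [up12 i] is the up-set of [i] in the twelve-element poset. *)
Definition up12 (i : nat) : seq nat :=
  nth [::] [:: [:: 0; 1; 2; 3; 4]; [:: 1; 2; 3; 4]; [:: 2; 3; 4]; [:: 3; 4]; [:: 4];
               iota 0 12; [:: 6; 7; 8; 9; 10; 11; 1; 2; 3; 4];
               [:: 7; 8; 9; 10; 11; 2; 3; 4]; [:: 8; 9; 10; 3; 4]; [:: 9; 10; 3; 4];
               [:: 10; 4]; [:: 11; 2; 3; 4]] i.

Lemma ord12_gen (i j : 'I_12) : ((i : nat), (j : nat)) \in gen12_pairs -> ord12 i j.
Proof. by move=> ij; apply: connect1; rewrite gen12E. Qed.

Lemma ord12_up12 (i j : 'I_12) : ord12 i j -> (j : nat) \in up12 i.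
Proof.
pose r := [rel i j : 'I_12 | all (fun n => n \in up12 i) (up12 j)].
have up12_refl (k : nat) : (k < 12)%N -> k \in up12 k.
  move=> lt_k; have : k \in iota 0 12 by rewrite mem_iota.
  by move: k {lt_k}; apply/allP.
have up12_gen : all (fun p => all (fun n => n \in up12 p.1) (up12 p.2)) gen12_pairs.
  by [].
move=> ij; have r_ij : r i j.
  apply: (@connect_sub_preorder _ gen12 r _ _ _ i j ij) => [k | k l t /allP r_lk /allP r_kt | k l].
  - exact/allP.
  - by apply/allP => n /r_kt /r_lk.
  - by rewrite gen12E => /(allP up12_gen).
exact: (allP r_ij) (up12_refl _ (ltn_ord j)).
Qed.

Lemma ord12_notin_up12 (i j : 'I_12) : (j : nat) \notin up12 i -> ord12 i j = false.
Proof. by move/negP => j_notin; apply/negP => /ord12_up12. Qed.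

Local Infix "⊓" := LMeet (at level 40, left associativity).
Local Infix "⊔" := LJoin (at level 50, left associativity).
Local Notation vx' := (LVar 0).
Local Notation vy' := (LVar 1).
Local Notation vy := (LVar 2).
Local Notation va := (LVar 3).
Local Notation vs := (LVar 4).
Local Notation vw := (LVar 5).
Local Notation vc := (LVar 6).
Local Notation vx := (vw ⊔ vx').
Local Notation vb := (va ⊔ vx').
Local Notation vz := (vy ⊔ vx').

(* Later entries use the already forced values of y and a. *)
Definition ladder_forcing : seq (nat * lterm) :=
  [:: (2, vy' ⊓ vz); (3, vy ⊓ vb); (5, va ⊓ vx); (4, (vs ⊔ va) ⊓ vy); (6, (vc ⊔ va) ⊓ vb)].

Section Ladder.
Variables (d : Order.disp_t) (L : latticeType d).
Variables (x' x b z z' w' w a s y y' c : L).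
Hypothesis inN : in_N L.
Hypothesis no_doubly_reducible : forall e : L, ~ doubly_reducible e.
Hypothesis shape_le : forall i j : 'I_12,
  (pts12 x' x b z z' w' w a s y y' c i <= pts12 x' x b z z' w' w a s y y' c j) = ord12 i j.
Hypotheses (def_x : x = w `|` x') (def_b : b = a `|` x') (def_z : z = y `|` x').
Hypotheses (def_w : w = a `&` x) (def_a : a = y `&` b) (def_y : y = y' `&` z).

Local Notation pt i := (@Ordinal 12 i isT).
Local Notation le_pt i j := (shape_le (pt i) (pt j)).

Let a_le_s : a <= s. Proof. by rewrite (le_pt 7 8) ord12_gen. Qed.
Let s_le_y : s <= y. Proof. by rewrite (le_pt 8 9) ord12_gen. Qed.
Let a_le_c : a <= c. Proof. by rewrite (le_pt 7 11) ord12_gen. Qed.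
Let c_le_b : c <= b. Proof. by rewrite (le_pt 11 2) ord12_gen. Qed.

Let y_nle_b : ~~ (y <= b). Proof. by rewrite (le_pt 9 2) ord12_notin_up12. Qed.
Let c_nle_y : ~~ (c <= y). Proof. by rewrite (le_pt 11 9) ord12_notin_up12. Qed.
Let x'_nle_y' : ~~ (x' <= y'). Proof. by rewrite (le_pt 0 10) ord12_notin_up12. Qed.
Let y'_nle_z : ~~ (y' <= z). Proof. by rewrite (le_pt 10 3) ord12_notin_up12. Qed.
Let w_nle_x' : ~~ (w <= x'). Proof. by rewrite (le_pt 6 0) ord12_notin_up12. Qed.
Let x'_nle_s : ~~ (x' <= s). Proof. by rewrite (le_pt 0 8) ord12_notin_up12. Qed.
Let x_nle_c : ~~ (x <= c). Proof. by rewrite (le_pt 1 11) ord12_notin_up12. Qed.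
Let a_nle_x : ~~ (a <= x). Proof. by rewrite (le_pt 7 1) ord12_notin_up12. Qed.
Let s_nle_b : ~~ (s <= b). Proof. by rewrite (le_pt 8 2) ord12_notin_up12. Qed.

Let a_le_y : a <= y. Proof. by rewrite def_a leIl. Qed.
Let y_le_y' : y <= y'. Proof. by rewrite def_y leIl. Qed.
Let w_le_a : w <= a. Proof. by rewrite def_w leIl. Qed.

Let gens : nat -> L := nth x' [:: x'; y'; y; a; s; w; c].

Let ladder_forcing_fixed :
  all (fun p => leval Order.meet Order.join gens p.2 == gens p.1) ladder_forcing.
Proof.
rewrite /= -def_z -def_y -def_b -def_a -def_x -def_w.
by rewrite (join_l a_le_s) (meet_l s_le_y) (join_l a_le_c) (meet_l c_le_b) !eqxx.
Qed.

Let ladder_identity t1 t2 : n5_forced_identity 7 ladder_forcing t1 t2 ->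
  leval Order.meet Order.join gens t1 = leval Order.meet Order.join gens t2.
Proof.
move=> /(in_N_forced_identity inN)/(_ gens).
by rewrite !(eq_leval _ _ _ (lforce_id ladder_forcing_fixed)).
Qed.

Let eq_b : b `&` (s `|` (x `&` c)) = a `|` (x `&` (s `|` c)).
Proof.
rewrite def_x def_b.
by apply: (@ladder_identity (vb ⊓ (vs ⊔ (vx ⊓ vc))) (va ⊔ (vx ⊓ (vs ⊔ vc)))); vm_compute.
Qed.

Let x'_le_z : x' <= z. Proof. by rewrite def_z leUr. Qed.
Let x'_le_b : x' <= b. Proof. by rewrite def_b leUr. Qed.

Let eq_z : z `&` (y' `|` c) = y `|` (b `&` (y' `|` c)).
Proof.
rewrite def_z def_b.
by apply: (@ladder_identity (vz ⊓ (vy' ⊔ vc)) (vy ⊔ (vb ⊓ (vy' ⊔ vc)))); vm_compute.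
Qed.

Let eq_x : x `&` (a `|` (x' `&` c)) = w `|` (x' `&` c).
Proof.
rewrite def_x.
by apply: (@ladder_identity (vx ⊓ (va ⊔ (vx' ⊓ vc))) (vw ⊔ (vx' ⊓ vc))); vm_compute.
Qed.

Let le_x'y' : x' `&` (y' `|` c) <= y' `|` (x `&` (s `|` c)).
Proof.
rewrite leEmeet def_x; apply/eqP.
by apply: (@ladder_identity (vx' ⊓ (vy' ⊔ vc) ⊓ (vy' ⊔ (vx ⊓ (vs ⊔ vc)))) (vx' ⊓ (vy' ⊔ vc)));
  vm_compute.
Qed.

Let le_x's : x' `&` (s `|` (x `&` c)) <= s `|` (x' `&` c).
Proof.
rewrite leEmeet def_x; apply/eqP.
by apply: (@ladder_identity (vx' ⊓ (vs ⊔ (vx ⊓ vc)) ⊓ (vs ⊔ (vx' ⊓ vc))) (vx' ⊓ (vs ⊔ (vx ⊓ vc))));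
  vm_compute.
Qed.

Let xsc_nle_a : ~~ (x `&` (s `|` c) <= a).
Proof.
apply/negP => le_a; apply: no_doubly_reducible (doubly_reducible_of_nle (esym eq_z) _ _ _ _).
- by apply: contra _ y_nle_b => le_y; apply: le_trans le_y (leIl _ _).
- apply: contra _ c_nle_y => le_y; apply: le_trans le_y.
  by rewrite lexI c_le_b leUr.
- apply: contra _ x'_nle_y' => le_z.
  apply: le_trans (le_trans le_x'y' _); first by rewrite lexI lexx (le_trans x'_le_z le_z).
  by rewrite leUx lexx (le_trans le_a (le_trans a_le_y y_le_y')).
- by apply: contra _ y'_nle_z => le_z; apply: le_trans (leUl _ _) le_z.
Qed.

Let b_nle_sxc : ~~ (b <= s `|` (x `&` c)).
Proof.
apply/negP => le_b; apply: no_doubly_reducible (doubly_reducible_of_nle (esym eq_x) _ _ _ _).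
- by apply: contra _ w_nle_x' => le_w; apply: le_trans le_w (leIl _ _).
- apply: contra _ x'_nle_s => le_w.
  apply: le_trans (le_trans le_x's _); first by rewrite lexI lexx (le_trans x'_le_b le_b).
  by rewrite leUx lexx (le_trans le_w (le_trans w_le_a a_le_s)).
- apply: contra _ x_nle_c => le_x; apply: le_trans le_x _.
  by rewrite leUx a_le_c leIr.
- by apply: contra _ a_nle_x => le_x; apply: le_trans (leUl _ _) le_x.
Qed.

Lemma ladder_false : False.
Proof.
apply: no_doubly_reducible (doubly_reducible_of_nle (esym eq_b) _ xsc_nle_a b_nle_sxc _).
- by apply: contra _ a_nle_x => le_a; apply: le_trans le_a (leIl _ _).
- by apply: contra _ s_nle_b => le_b; apply: le_trans (leUl _ _) le_b.
Qed.

End Ladder.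

Lemma ladder_equations d (L : latticeType d) (S : L -> Prop) (g : nat -> nat -> L)
    (x' x b z z' w' w a y y' : L) :
  iso_2x5 S g ->
  (forall j, (j < 5)%N -> g 0%N j = nth w' [:: w'; w; a; y; y'] j /\
                         g 1%N j = nth x' [:: x'; x; b; z; z'] j) ->
  [/\ x = w `|` x', b = a `|` x' & z = y `|` x'] /\
  [/\ w = a `&` x, a = y `&` b & y = y' `&` z].
Proof.
move=> [_ [g_ops _]] g_val; have [_ /= g10] := g_val 0 isT.
have rung j : (j < 5)%N ->
    nth x' [:: x'; x; b; z; z'] j = nth w' [:: w'; w; a; y; y'] j `|` x'.
  move=> lt_j; have [<- <-] := g_val j lt_j.
  by rewrite -g10 -(g_ops 0 j 1 0 isT lt_j isT isT).2 maxn0.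
have step j : (j < 4)%N ->
    nth w' [:: w'; w; a; y; y'] j =
    nth w' [:: w'; w; a; y; y'] j.+1 `&` nth x' [:: x'; x; b; z; z'] j.
  move=> lt_j; have lt_j5 := ltn_trans lt_j (ltnSn 4).
  have [<- <-] := g_val j lt_j5; have [<- _] := g_val j.+1 lt_j.
  by rewrite -(g_ops 0 j.+1 1 j isT lt_j isT lt_j5).1 (minn_idPr (leqnSn j)).
by split; split; [exact: (rung 1) | exact: (rung 2) | exact: (rung 3)
                 | exact: (step 1) | exact: (step 2) | exact: (step 3)].
Qed.

Theorem lemma5p3 (d : Order.disp_t) (L : latticeType d) :
  in_N L ->
  (forall e : L, ~ doubly_reducible e) ->
  ~ (exists x' x b z z' w' w a s y y' c : L,
       shape12 (pts12 x' x b z z' w' w a s y y' c) /\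
       exists g : nat -> nat -> L,
         iso_2x5 (gen_sub [:: x'; x; b; z; z'; w'; w; a; y; y']) g /\
         (forall j, (j < 5)%N ->
            g 0%N j = nth w' [:: w'; w; a; y; y'] j /\
            g 1%N j = nth x' [:: x'; x; b; z; z'] j)).
Proof.
move=> inN no_dr [x' [x [b [z [z' [w' [w [a [s [y [y' [c [[_ shape_le] [g [iso g_val]]]]]]]]]]]]]]].
have [[def_x def_b def_z] [def_w def_a def_y]] := ladder_equations iso g_val.
exact: ladder_false inN no_dr shape_le def_x def_b def_z def_w def_a def_y.
Qed.
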